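(* Let $f:\mathbb{R}^d\to\mathbb{R}$ be convex and $M$-Lipschitz, i.e. $|f(x)-f(y)|\le M\|x-y\|$ for all $x,y$, and suppose $X^*\neq\emptyset$. Run the Proximal Bundle Method with parameter $\beta\in(0,1)$ and constant stepsize $\rho_k=\rho>0$ for all $k$. Let $D^2=\sup_k \mathrm{dist}(x_k,X^* )^2$ and assume $0<D^2<\infty$. Then for any $0<\epsilon\le f(x_0)-f^*$, the number of descent steps taken before the first iterate $x_k$ with $f(x_k)-f^*\le\epsilon$ is found is at most $$\frac{2\rho D^2}{\beta\epsilon}+\left\lceil \frac{2\log\left(\frac{f(x_0)-f^*}{\rho D^2}\right)}{\beta}\right\rceil_+,$$ and the number of null steps taken before then is at most $$\frac{48\rho M^2D^4}{\beta(1-\beta)^2\epsilon^3}+\frac{32M^2}{\beta(1-\beta)^2\rho^2D^2}.$$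
   Context: Throughout, $f:\mathbb{R}^d\to\mathbb{R}$ is a proper closed convex function attaining its minimum $f^*=\inf f$ on the nonempty set $X^*=\{x: f(x)=f^*\}$; $\mathrm{dist}(x,S)=\inf_{y\in S}\|x-y\|$; $\partial f(x)$ is the convex subdifferential; $\lceil a\rceil_+=\max\{\lceil a\rceil,0\}$. A subgradient oracle returns, for any $x$, the value $f(x)$ and some $g(x)\in\partial f(x)$. Proximal Bundle Method: fix $\beta\in(0,1)$, $x_0=z_0\in\mathbb{R}^d$, $g_0=g(x_0)$, and the initial model $f_0(x)=f(x_0)+\langle g_0,x-x_0\rangle$. At iteration $k\ge0$, given a convex model $f_k:\mathbb{R}^d\to\mathbb{R}$ and stepsize $\rho_k>0$, compute $z_{k+1}=\operatorname{argmin}_z f_k(z)+\frac{\rho_k}{2}\|z-x_k\|^2$. If $\beta(f(x_k)-f_k(z_{k+1}))\le f(x_k)-f(z_{k+1})$, iteration $k$ is a descent step and $x_{k+1}=z_{k+1}$; otherwise it is a null step and $x_{k+1}=x_k$. Then a new convex model $f_{k+1}$ and stepsize $\rho_{k+1}$ are chosen satisfying, with $g_{k+1}=g(z_{k+1})$ and $s_{k+1}=\rho_k(x_k-z_{k+1})$: (1) $f_{k+1}(x)\le f(x)$ for all $x$; (2) $f_{k+1}(x)\ge f(z_{k+1})+\langle g_{k+1},x-z_{k+1}\rangle$ for all $x$; (3) if iteration $k$ was a null step, $f_{k+1}(x)\ge f_k(z_{k+1})+\langle s_{k+1},x-z_{k+1}\rangle$ for all $x$; (4) if iteration $k$ was a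 null step, $\rho_{k+1}\ge\rho_k$. An $\epsilon$-minimizer is a point $x$ with $f(x)-f^*\le\epsilon$. *)

(* R^d is modelled as row vectors 'rV[R]_d. *)
From mathcomp Require Import all_boot all_order all_algebra.
From mathcomp Require Import all_classical all_reals all_analysis.
Set Implicit Arguments. Unset Strict Implicit. Unset Printing Implicit Defensive.
Import Order.TTheory GRing.Theory Num.Theory.
Local Open Scope ring_scope.
Local Open Scope classical_set_scope.

Definition dotp (R : realType) (d : nat) (u v : 'rV[R]_d) : R :=
  \sum_(i < d) u 0 i * v 0 i.
Definition enorm (R : realType) (d : nat) (u : 'rV[R]_d) : R :=
  Num.sqrt (dotp u u).

Definition convex_fun (R : realType) (d : nat) (f : 'rV[R]_d -> R) : Prop :=
  forall (x y : 'rV[R]_d) (t : R), 0 <= t -> t <= 1 ->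
    f (t *: x + (1 - t) *: y) <= t * f x + (1 - t) * f y.

Definition lipschitz_with (R : realType) (d : nat) (f : 'rV[R]_d -> R) (M : R) : Prop :=
  forall x y, `|f x - f y| <= M * enorm (x - y).

Definition is_subgrad (R : realType) (d : nat) (f : 'rV[R]_d -> R) (x g : 'rV[R]_d) : Prop :=
  forall y, f x + dotp g (y - x) <= f y.

Definition argmin_set (R : realType) (d : nat) (f : 'rV[R]_d -> R) : set 'rV[R]_d :=
  [set y | forall w, f y <= f w].

Definition dist_set (R : realType) (d : nat) (x : 'rV[R]_d) (S : set 'rV[R]_d) : R :=
  inf [set enorm (x - y) | y in S].

Definition ceil_pos (R : realType) (a : R) : R :=
  (Order.max (Num.ceil a) 0%Z)%:~R.

(* A run of the Proximal Bundle Method with constant stepsize rho: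
   iterates x, candidate points z, models fm, oracle subgradient map orc. *)
Definition descent_step (R : realType) (d : nat) (f : 'rV[R]_d -> R) (beta : R)
  (x z : nat -> 'rV[R]_d) (fm : nat -> 'rV[R]_d -> R) (k : nat) : bool :=
  beta * (f (x k) - fm k (z k.+1)) <= f (x k) - f (z k.+1).

Definition PBM_run (R : realType) (d : nat) (f : 'rV[R]_d -> R)
  (orc : 'rV[R]_d -> 'rV[R]_d) (beta rho : R) (x0 : 'rV[R]_d)
  (x z : nat -> 'rV[R]_d) (fm : nat -> 'rV[R]_d -> R) : Prop :=
  [/\ (x 0%N = x0 /\ z 0%N = x0),
      (forall y, fm 0%N y = f x0 + dotp (orc x0) (y - x0)),
      (forall k, convex_fun (fm k)) /\
      (forall k w, fm k (z k.+1) + rho / 2 * enorm (z k.+1 - x k) ^+ 2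
                   <= fm k w + rho / 2 * enorm (w - x k) ^+ 2),
      (forall k, x k.+1 = if descent_step f beta x z fm k then z k.+1 else x k) &
      (* model conditions (1)-(3); (4) holds trivially as rho_k = rho *)
      [/\ (forall k y, fm k y <= f y),
          (forall k y, f (z k.+1) + dotp (orc (z k.+1)) (y - z k.+1) <= fm k.+1 y) &
          (forall k y, ~~ descent_step f beta x z fm k ->
             fm k (z k.+1) + dotp (rho *: (x k - z k.+1)) (y - z k.+1) <= fm k.+1 y)]].

Definition n_descent (R : realType) (d : nat) (f : 'rV[R]_d -> R) (beta : R)
  (x z : nat -> 'rV[R]_d) (fm : nat -> 'rV[R]_d -> R) (K : nat) : nat :=
  #|[set k : 'I_K | descent_step f beta x z fm k]|.
Definition n_null (R : realType) (d : nat) (f : 'rV[R]_d -> R) (beta : R)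
  (x z : nat -> 'rV[R]_d) (fm : nat -> 'rV[R]_d -> R) (K : nat) : nat :=
  #|[set k : 'I_K | ~~ descent_step f beta x z fm k]|.

(* Write gap_k = f(x_k) - f^* for the objective gap and
   G_k = f(x_k) - (f_k(z_{k+1}) + rho/2 ||z_{k+1} - x_k||^2) for the proximal gap.
   The proof has two independent halves.

   Convexity of f and the
     bound dist(x_k, X^* )^2 <= D^2 give G_k >= gap_lb (rho D^2) gap_k, a quantity
     behaving like gap_k^2 / (2 rho D^2) for small gaps and like gap_k / 2 for
     large ones; a descent step gives gap_{k+1} <= gap_k - beta G_k; a null step
     keeps gap_k and, since subgradients are bounded by the Lipschitz constant M,
     gives G_k^2 <= kappa (G_k - G_{k+1}) with kappa = 8 M^2 / (rho (1-beta)^2).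
   - Counting (section Counting).  These three recursive inequalities alone bound
     the number of descent steps (ln gap_k drops by beta/2 while gap_k > rho D^2,
     then 1/gap_k grows by beta/(2 rho D^2)) and, through the potential
     null_budget, the number of null steps (kappa/G_k grows by 1 at each null step). *)

From mathcomp Require Import all_boot all_order all_algebra.
From mathcomp Require Import all_classical all_reals all_analysis.
From mathcomp Require Import ring lra.
Set Implicit Arguments. Unset Strict Implicit. Unset Printing Implicit Defensive.
Import Order.TTheory GRing.Theory Num.Theory.
Local Open Scope ring_scope.

Section InnerProduct.
Variables (R : realType) (d : nat).
Implicit Types (u v w : 'rV[R]_d) (a : R).

Lemma dotpC u v : dotp u v = dotp v u.
Proof. by apply: eq_bigr => i _; rewrite mulrC. Qed.

Lemma dotpDl u v w : dotp (u + v) w = dotp u w + dotp v w.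
Proof. by rewrite /dotp -big_split; apply: eq_bigr => i _; rewrite mxE mulrDl. Qed.

Lemma dotpZl a u v : dotp (a *: u) v = a * dotp u v.
Proof. by rewrite /dotp mulr_sumr; apply: eq_bigr => i _; rewrite mxE mulrA. Qed.

Lemma dotpNl u v : dotp (- u) v = - dotp u v.
Proof. by rewrite -scaleN1r dotpZl mulN1r. Qed.

Lemma dotpBl u v w : dotp (u - v) w = dotp u w - dotp v w.
Proof. by rewrite dotpDl dotpNl. Qed.

Lemma dotpDr u v w : dotp w (u + v) = dotp w u + dotp w v.
Proof. by rewrite dotpC dotpDl !(dotpC w). Qed.

Lemma dotpZr a u v : dotp v (a *: u) = a * dotp v u.
Proof. by rewrite dotpC dotpZl dotpC. Qed.

Lemma dotpNr u v : dotp v (- u) = - dotp v u.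
Proof. by rewrite dotpC dotpNl dotpC. Qed.

Lemma dotp_ge0 u : 0 <= dotp u u.
Proof. by apply: sumr_ge0 => i _; rewrite -expr2 sqr_ge0. Qed.

Lemma enorm_sq u : enorm u ^+ 2 = dotp u u.
Proof. by rewrite /enorm sqr_sqrtr // dotp_ge0. Qed.

Lemma enorm_ge0 u : 0 <= enorm u.
Proof. exact: sqrtr_ge0. Qed.

Lemma enormZ a u : 0 <= a -> enorm (a *: u) = a * enorm u.
Proof.
move=> a0; rewrite /enorm dotpZl dotpZr mulrA -expr2 sqrtrM ?sqr_ge0 //.
by rewrite sqrtr_sqr ger0_norm.
Qed.

Lemma dotp_sqD u v : dotp (u + v) (u + v) = dotp u u + 2 * dotp u v + dotp v v.
Proof. rewrite dotpDl !dotpDr (dotpC v u); ring. Qed.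

Lemma dotp_sqZ a u : dotp (a *: u) (a *: u) = a ^+ 2 * dotp u u.
Proof. by rewrite dotpZl dotpZr mulrA expr2. Qed.

Lemma dotp_sqN u v : dotp (u - v) (u - v) = dotp (v - u) (v - u).
Proof. by rewrite -opprB dotpNl dotpC dotpNl opprK. Qed.

Lemma dotp_sqB_le u v : dotp (u - v) (u - v) <= 2 * dotp u u + 2 * dotp v v.
Proof.
have := dotp_sqD u (- v); rewrite dotpNr dotpNl dotpNr opprK => h1.
have := dotp_sqD u v; have := dotp_ge0 (u + v); lra.
Qed.

(* completing the square: <g, w> + rho/2 |w|^2 >= - |g|^2 / (2 rho) *)
Lemma linear_quad_lb rho u w : 0 < rho ->
  - (dotp u u / (2 * rho)) <= dotp u w + rho / 2 * dotp w w.
Proof.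
move=> r0; have := dotp_ge0 (rho *: w + u).
rewrite dotp_sqD dotp_sqZ dotpZl (dotpC w u) => h.
have -> : - (dotp u u / (2 * rho)) = dotp u w + rho / 2 * dotp w w
    - (rho ^+ 2 * dotp w w + 2 * (rho * dotp u w) + dotp u u) / (2 * rho).
  by field; lra.
have : 0 <= (rho ^+ 2 * dotp w w + 2 * (rho * dotp u w) + dotp u u) / (2 * rho).
  by apply: divr_ge0 => //; lra.
lra.
Qed.

End InnerProduct.

Section RealFacts.
Variable R : realType.

Lemma lef_inv (a b : R) : 0 < a -> a <= b -> b^-1 <= a^-1.
Proof. by move=> a0 ab; rewrite lef_pV2 ?posrE //; exact: lt_le_trans ab. Qed.

Lemma ge0_of_perturbations (a b : R) : 0 <= b ->
  (forall t, 0 < t -> t <= 1 -> 0 <= a + t * b) -> 0 <= a.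
Proof.
move=> b0 H; rewrite leNgt; apply/negP => a0.
have ba : 0 < b - a by lra.
have t0 : 0 < - a / (b - a) by apply: divr_gt0; lra.
have t1 : - a / (b - a) <= 1 by rewrite ler_pdivrMr //; lra.
have := H _ t0 t1.
have -> : a + - a / (b - a) * b = - (a ^+ 2) / (b - a) by field; lra.
rewrite pmulr_lge0 ?invr_gt0 //; nra.
Qed.

Lemma le_mul_sqr_inf (E : set R) (c A : R) :
  (exists e, E e) -> (forall e, E e -> 0 <= e) -> 0 <= c ->
  (forall e, E e -> A <= c * e ^+ 2) -> A <= c * (inf E) ^+ 2.
Proof.
move=> [e0 He0] Epos c0 H.
have d0 : 0 <= inf E by apply: lb_le_inf; [exists e0 | move=> y Ey; exact: Epos].
have hinf : has_inf E by split; [exists e0 | exists 0 => y Ey; exact: Epos].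
rewrite leNgt; apply/negP => hA.
have {}c0 : 0 < c.
  rewrite lt_neqAle c0 andbT; apply/eqP => c00.
  by move: hA (H _ He0); rewrite -c00 !mul0r; lra.
set gam := A - c * inf E ^+ 2.
have g0 : 0 < gam by rewrite /gam; lra.
have den : 0 < c * (2 * inf E + 1) by apply: mulr_gt0; lra.
set eta := Num.min 1 (gam / (c * (2 * inf E + 1))).
have eta0 : 0 < eta by rewrite /eta lt_min ltr01 /= divr_gt0.
have eta1 : eta <= 1 by rewrite /eta ge_min lexx.
have eta2 : eta * (c * (2 * inf E + 1)) <= gam.
  by rewrite -ler_pdivlMr // /eta ge_min lexx orbT.
have [e Ee elt] := inf_adherent eta0 hinf.
have ee := Epos _ Ee.
have h6 : c * e ^+ 2 < c * (inf E + eta) ^+ 2.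
  by rewrite ltr_pM2l // ltrXn2r ?nnegrE //; lra.
have h9 : c * eta ^+ 2 <= c * eta by apply: ler_wpM2l; [lra | nra].
have := H _ Ee; rewrite /gam in eta2; nra.
Qed.

Lemma ln_contract (beta a b : R) : 0 < a -> 0 < b -> b <= a - beta * (a / 2) ->
  beta / 2 <= ln a - ln b.
Proof.
move=> a0 b0 hb.
have hba : b / a <= 1 - beta / 2 by rewrite ler_pdivrMr //; nra.
suff : ln (b / a) <= - (beta / 2) by rewrite ln_div ?posrE //; lra.
have -> : b / a = 1 + (b / a - 1) by ring.
apply: le_trans (le_ln1Dx _) _; last lra.
have : 0 < b / a by apply: divr_gt0.
lra.
Qed.

Lemma inv_gain (P beta D D' : R) : 0 < P -> 0 < beta -> 0 < D -> 0 < D' ->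
  D' <= D - beta * (D ^+ 2 / (2 * P)) -> D^-1 + beta / (2 * P) <= D'^-1.
Proof.
move=> P0 b0 D0 D'0 hD.
have q0 : 0 <= beta * (D ^+ 2 / (2 * P)) by apply: mulr_ge0; [lra | apply: divr_ge0; nra].
have -> : D^-1 + beta / (2 * P) = (2 * P + beta * D) / (2 * P * D) by field; lra.
rewrite ler_pdivrMr; last nra.
apply: le_trans (_ : D'^-1 * (D' * (2 * P + beta * D)) <= _).
  by rewrite mulrA mulVf ?mul1r // lt0r_neq0.
apply: ler_wpM2l; first by rewrite invr_ge0 ltW.
have : D' * (beta * D) <= D * (beta * D) by apply: ler_wpM2r; nra.
suff : D' * (2 * P) <= 2 * P * D - beta * D ^+ 2 by nra.
move: hD; have -> : D - beta * (D ^+ 2 / (2 * P)) = (2 * P * D - beta * D ^+ 2) / (2 * P)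
  by field; lra.
by rewrite ler_pdivlMr //; nra.
Qed.

Lemma inv_gain_null (kap G G' : R) : 0 < kap -> 0 < G -> 0 < G' ->
  G ^+ 2 <= kap * (G - G') -> kap / G + 1 <= kap / G'.
Proof.
move=> k0 G0 G'0 h.
rewrite ler_pdivlMr // mulrDl mul1r mulrAC.
suff : kap * G' / G <= kap - G' by lra.
by rewrite ler_pdivrMr //; nra.
Qed.

Lemma ceil_pos_ge0 (a : R) : 0 <= ceil_pos a.
Proof. by rewrite /ceil_pos ler0z le_max lexx orbT. Qed.

Lemma ceil_pos_S (a : R) (n : nat) : n%:R < a -> n.+1%:R <= ceil_pos a.
Proof.
move=> h.
have h2 : (n%:Z + 1 <= Num.ceil a)%R by rewrite lezD1 ceil_gt_int.
rewrite /ceil_pos (_ : n.+1%:R = (n.+1%:Z)%:~R) // ler_int -addn1 PoszD.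
by apply: le_trans h2 _; rewrite le_max lexx.
Qed.

End RealFacts.

(* The lower bound max_{0 <= t <= 1} (t D - P t^2 / 2) >= gap_lb P D on the proximal
   gap, in terms of the objective gap D and P = rho D^2. *)
Definition gap_lb (R : realType) (P D : R) : R :=
  if D <= P then D ^+ 2 / (2 * P) else D / 2.

(* Potential bounding the number of null steps still possible from objective gap D
   (eps = target accuracy, kap = null step rate): it dominates the sum of
   kap / gap_lb P D_i along any sequence of descent steps D = D_0 > D_1 > ... > eps. *)
Definition null_budget (R : realType) (P eps beta kap D : R) : R :=
  if D <= P then (2 * P * kap / eps ^+ 2) * ((eps^-1 - D^-1) * (2 * P / beta) + 1)
  else 4 * P ^+ 2 * kap / (beta * eps ^+ 3) + (4 * kap / beta) * (P^-1 - D^-1)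
       + 2 * kap * D^-1.

Lemma gap_lb_gt0 (R : realType) (P D : R) : 0 < P -> 0 < D -> 0 < gap_lb P D.
Proof.
move=> P0 D0; rewrite /gap_lb; case: ifP => _; last exact: divr_gt0.
by apply: divr_gt0; [rewrite exprn_gt0 | rewrite mulr_gt0].
Qed.

Lemma null_budget_small_le (R : realType) (P eps beta kap D : R) :
  0 < P -> 0 < eps -> 0 < beta -> beta < 1 -> 0 < kap -> 0 < D -> D <= P ->
  (2 * P * kap / eps ^+ 2) * ((eps^-1 - D^-1) * (2 * P / beta) + 1)
    <= 4 * P ^+ 2 * kap / (beta * eps ^+ 3).
Proof.
move=> P0 eps0 beta0 beta1 kap0 D0 DP.
have hu := lef_inv D0 DP.
have c1 : 0 <= 2 * P * kap / eps ^+ 2 by apply: divr_ge0; [nra | rewrite exprn_ge0 // ltW].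
have k1 : 0 <= 2 * P / beta by apply: divr_ge0; lra.
have pk : P^-1 * (2 * P / beta) = 2 / beta by field; lra.
have h : (eps^-1 - D^-1) * (2 * P / beta) + 1 <= eps^-1 * (2 * P / beta).
  have : 1 <= 2 / beta by rewrite ler_pdivlMr //; lra.
  have := ler_wpM2r k1 hu; lra.
apply: le_trans (ler_wpM2l c1 h) _.
by rewrite le_eqVlt; apply/orP; left; apply/eqP; field; lra.
Qed.

Lemma null_budget_ge (R : realType) (P eps beta kap D : R) :
  0 < P -> 0 < eps -> 0 < beta -> beta < 1 -> 0 < kap -> eps < D ->
  kap / gap_lb P D <= null_budget P eps beta kap D.
Proof.
move=> P0 eps0 beta0 beta1 kap0 eD; have D0 : 0 < D by lra.
rewrite /gap_lb /null_budget; case: ifP => DP.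
  have hu := lef_inv eps0 (ltW eD).
  have c1 : 0 <= 2 * P * kap / eps ^+ 2 by apply: divr_ge0; [nra | rewrite exprn_ge0 // ltW].
  have h1 : 1 <= (eps^-1 - D^-1) * (2 * P / beta) + 1.
    have : 0 <= 2 * P / beta by apply: divr_ge0; lra.
    have : 0 <= eps^-1 - D^-1 by lra.
    nra.
  apply: le_trans (_ : 2 * P * kap / eps ^+ 2 <= _); last first.
    by rewrite -{1}(mulr1 (2 * P * kap / eps ^+ 2)) ler_wpM2l.
  have -> : kap / (D ^+ 2 / (2 * P)) = 2 * P * kap * (D^-1) ^+ 2 by field; lra.
  rewrite /(_ / _) -exprVn; apply: ler_wpM2l; first nra.
  by rewrite lerXn2r ?nnegrE ?invr_ge0 //; lra.
have hu : D^-1 <= P^-1 by apply: lef_inv => //; rewrite ltW // ltNge DP.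
have B0 : 0 <= 4 * P ^+ 2 * kap / (beta * eps ^+ 3).
  by apply: divr_ge0; [nra | rewrite mulr_ge0 ?exprn_ge0 // ltW].
have -> : kap / (D / 2) = 2 * kap * D^-1 by field; lra.
have : 0 <= 4 * kap / beta by apply: divr_ge0; lra.
nra.
Qed.

Lemma null_budget_le (R : realType) (P eps beta kap D : R) :
  0 < P -> 0 < eps -> 0 < beta -> beta < 1 -> 0 < kap -> eps < D ->
  null_budget P eps beta kap D <= 4 * P ^+ 2 * kap / (beta * eps ^+ 3) + 4 * kap / (beta * P).
Proof.
move=> P0 eps0 beta0 beta1 kap0 eD; have D0 : 0 < D by lra.
have h2 : 0 <= 4 * kap / (beta * P) by apply: divr_ge0; nra.
rewrite /null_budget; case: ifP => DP.
  by have := null_budget_small_le P0 eps0 beta0 beta1 kap0 D0 DP; lra.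
have hu : 0 <= D^-1 by rewrite invr_ge0 ltW.
have -> : 4 * kap / (beta * P) = (4 * kap / beta) * P^-1 by field; lra.
have : 2 * kap <= 4 * kap / beta by rewrite ler_pdivlMr //; nra.
nra.
Qed.

Lemma null_budget_descent (R : realType) (P eps beta kap D D' : R) :
  0 < P -> 0 < eps -> 0 < beta -> beta < 1 -> 0 < kap -> eps < D -> 0 < D' ->
  D' <= D - beta * gap_lb P D ->
  null_budget P eps beta kap D' <= null_budget P eps beta kap D - kap / gap_lb P D.
Proof.
move=> P0 eps0 beta0 beta1 kap0 eD D'0 hD; have D0 : 0 < D by lra.
have D'D : D' <= D by have := gap_lb_gt0 P0 D0; nra.
have b4 : 0 <= 4 * kap / beta by apply: divr_ge0; lra.
move: hD; rewrite /gap_lb /null_budget; case: ifP => DP hD.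
  have hK := inv_gain P0 beta0 D0 D'0 hD.
  rewrite (le_trans D'D DP).
  set c := 2 * P * kap / eps ^+ 2; set k := 2 * P / beta.
  have c0 : 0 < c by apply: divr_gt0; [nra | rewrite exprn_gt0].
  have k0 : 0 <= k by apply: divr_ge0; lra.
  have hk : (D^-1 + beta / (2 * P)) * k = D^-1 * k + 1 by rewrite /k; field; lra.
  have -> : kap / (D ^+ 2 / (2 * P)) = 2 * P * kap * (D^-1) ^+ 2 by field; lra.
  have h3 : 2 * P * kap * (D^-1) ^+ 2 <= c.
    rewrite /c /(_ / (eps ^+ 2)) -exprVn; apply: ler_wpM2l; first nra.
    by rewrite lerXn2r ?nnegrE ?invr_ge0 //; have := lef_inv eps0 (ltW eD); lra.
  have := ler_wpM2r k0 hK; rewrite hk => hh.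
  suff : c * ((eps^-1 - D'^-1) * k + 1) <= c * ((eps^-1 - D^-1) * k + 1) - c by lra.
  have : c * (D^-1 * k + 1) <= c * (D'^-1 * k) by apply: ler_wpM2l; lra.
  nra.
have hu : D^-1 <= P^-1 by apply: lef_inv => //; rewrite ltW // ltNge DP.
have -> : kap / (D / 2) = 2 * kap * D^-1 by field; lra.
case: ifP => D'P.
  by have := null_budget_small_le P0 eps0 beta0 beta1 kap0 D'0 D'P; nra.
have K2 : 2 * D^-1 <= (2 - beta) * D'^-1.
  rewrite -/((2 - beta) / D') ler_pdivlMr // mulrAC ler_pdivrMr //; nra.
have : 2 * kap / beta * (2 * D^-1) <= 2 * kap / beta * ((2 - beta) * D'^-1).
  by apply: ler_wpM2l => //; apply: divr_ge0; lra.
have -> : 2 * kap / beta * (2 * D^-1) = 4 * kap / beta * D^-1 by ring.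
have -> : 2 * kap / beta * ((2 - beta) * D'^-1) = 4 * kap / beta * D'^-1 - 2 * kap * D'^-1.
  by field; lra.
lra.
Qed.

Definition nsteps (p : nat -> bool) (k : nat) : nat := (\sum_(i < k) p i)%N.

Lemma nsteps0 (p : nat -> bool) : nsteps p 0 = 0%N.
Proof. by rewrite /nsteps big_ord0. Qed.

Lemma nstepsS (p : nat -> bool) (k : nat) : nsteps p k.+1 = (nsteps p k + p k)%N.
Proof. by rewrite /nsteps big_ord_recr. Qed.

Lemma nsteps_compl (p : nat -> bool) (k : nat) :
  (nsteps p k + nsteps (fun i => ~~ p i) k)%N = k.
Proof.
rewrite /nsteps -big_split /= (eq_bigr (fun _ => 1%N)) ?sum1_card ?card_ord //.
by move=> i _; rewrite addnC addn_negb.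
Qed.

Lemma card_nsteps (p : nat -> bool) (K : nat) : #|[set k : 'I_K | p k]| = nsteps p K.
Proof.
rewrite -sum1_card big_mkcond /=; apply: eq_bigr => i _.
by rewrite inE; case: (p i).
Qed.

Lemma card_nsteps_classic (p : nat -> bool) (K : nat) :
  #|[set k : 'I_K | p k]%classic| = nsteps p K.
Proof.
rewrite -card_nsteps; apply: eq_card => i.
by rewrite inE; apply/idP/idP => [/set_mem | /mem_set].
Qed.

Definition gap_above (R : realType) (eps : R) (gap : nat -> R) (k : nat) : Prop :=
  forall j, (j <= k)%N -> eps < gap j.

Lemma gap_above_prev (R : realType) (eps : R) (gap : nat -> R) (k : nat) :
  gap_above eps gap k.+1 -> gap_above eps gap k.
Proof. by move=> h j hj; apply: h; exact: leqW. Qed.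

Lemma gap_above_last (R : realType) (eps : R) (gap : nat -> R) (k : nat) :
  gap_above eps gap k -> eps < gap k.
Proof. by apply. Qed.

Section Counting.
Variables (R : realType) (P eps beta kap : R) (gap G : nat -> R) (desc : nat -> bool).
Hypotheses (P0 : 0 < P) (eps0 : 0 < eps) (beta0 : 0 < beta) (beta1 : beta < 1)
  (kap0 : 0 < kap).
Hypothesis G_ge : forall k, gap_lb P (gap k) <= G k.
Hypothesis descent_gap : forall k, desc k -> gap k.+1 <= gap k - beta * G k.
Hypothesis null_gap : forall k, ~~ desc k ->
  gap k.+1 = gap k /\ G k ^+ 2 <= kap * (G k - G k.+1).

Local Notation descents := (nsteps desc).
Local Notation nulls := (nsteps (fun i => ~~ desc i)).
Local Notation U := (null_budget P eps beta kap).
Local Notation descent_bound :=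
  (2 * P / (beta * eps) + ceil_pos (2 * ln (gap 0 / P) / beta)).
Local Notation null_bound :=
  (4 * P ^+ 2 * kap / (beta * eps ^+ 3) + 4 * kap / (beta * P)).

Lemma count_bounds_ge0 : 0 <= descent_bound /\ 0 <= null_bound.
Proof.
have bP : 0 < beta * P := mulr_gt0 beta0 P0.
split; first by rewrite addr_ge0 ?ceil_pos_ge0 ?divr_ge0 ?mulr_ge0 // ltW.
by rewrite addr_ge0 ?divr_ge0 ?mulr_ge0 ?exprn_ge0 // ltW.
Qed.

Lemma G_gt0 k : eps < gap k -> 0 < G k.
Proof.
move=> ek; apply: lt_le_trans (G_ge k).
exact: gap_lb_gt0 P0 (lt_trans eps0 ek).
Qed.

Lemma descent_gap_lb k : desc k -> eps < gap k ->
  gap k.+1 <= gap k - beta * gap_lb P (gap k).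
Proof.
move=> dk ek; apply: le_trans (descent_gap dk) _.
by rewrite lerD2l lerN2 ler_wpM2l ?G_ge // ltW.
Qed.

Lemma gap_nonincreasing k : eps < gap k -> gap k.+1 <= gap k.
Proof.
move=> ek; case dk: (desc k); last by have [-> _] := null_gap (negbT dk).
have := descent_gap dk; have := G_gt0 ek; have := beta0; nra.
Qed.

(* potential argument: kap / G_k grows by 1 at each null step, and a descent step
   costs at most the decrease of the null budget *)
Lemma null_potential k : gap_above eps gap k ->
  (nulls k)%:R + (U (gap k) - kap / G k) <= U (gap 0).
Proof.
have k0 := kap0.
elim: k => [|k IH] above.
  have := G_gt0 (gap_above_last above); rewrite nsteps0 => G0.
  have : 0 <= kap / G 0 by apply: divr_ge0; lra.
  lra.
have above' := gap_above_prev above.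
have ek := gap_above_last above'; have ek1 := gap_above_last above.
have G0 := G_gt0 ek; have G1 := G_gt0 ek1.
have {}IH := IH above'.
rewrite nstepsS natrD; case dk: (desc k) => /=.
  have hU := null_budget_descent P0 eps0 beta0 beta1 kap0 ek (lt_trans eps0 ek1)
    (descent_gap_lb dk ek).
  have : kap / G k <= kap / gap_lb P (gap k).
    apply: ler_wpM2l; first lra.
    exact: lef_inv (gap_lb_gt0 P0 (lt_trans eps0 ek)) (G_ge k).
  have : 0 <= kap / G k.+1 by apply: divr_ge0; lra.
  lra.
have [eq_gap hG] := null_gap (negbT dk).
have := inv_gain_null kap0 G0 G1 hG.
rewrite eq_gap; lra.
Qed.

Lemma null_count k : gap_above eps gap k -> (nulls k)%:R <= null_bound.
Proof.
move=> above; have ek := gap_above_last above.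
have := null_potential above.
have := null_budget_ge P0 eps0 beta0 beta1 kap0 ek.
have := null_budget_le P0 eps0 beta0 beta1 kap0 (above 0%N (leq0n k)).
have : kap / G k <= kap / gap_lb P (gap k).
  apply: ler_wpM2l; first exact: ltW.
  exact: lef_inv (gap_lb_gt0 P0 (lt_trans eps0 ek)) (G_ge k).
lra.
Qed.

(* while the gap exceeds P, each descent step lowers ln gap_k by beta/2 *)
Lemma descents_large_gap k : gap_above eps gap k -> P < gap k ->
  (descents k)%:R * (beta / 2) <= ln (gap 0) - ln (gap k).
Proof.
elim: k => [|k IH] above Pk; first by rewrite nsteps0 mul0r subrr.
have above' := gap_above_prev above; have ek := gap_above_last above'.
have Pk' : P < gap k := lt_le_trans Pk (gap_nonincreasing ek).
have {}IH := IH above' Pk'.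
rewrite nstepsS natrD mulrDl; case dk: (desc k) => /=; last first.
  by have [-> _] := null_gap (negbT dk); rewrite mul0r addr0.
have gkP : (gap k <= P) = false by rewrite leNgt Pk'.
have := descent_gap_lb dk ek; rewrite /gap_lb gkP => hd.
have := ln_contract (lt_trans P0 Pk') (lt_trans P0 Pk) hd.
lra.
Qed.

Lemma descents_large_gap_lt k : gap_above eps gap k -> P < gap k ->
  (descents k)%:R < 2 * ln (gap 0 / P) / beta.
Proof.
move=> above Pk; have := descents_large_gap above Pk.
have g0 : 0 < gap 0 by have := above 0%N (leq0n k); have := eps0; lra.
have : ln P < ln (gap k) by rewrite ltr_ln ?posrE //; have := P0; lra.
rewrite ln_div ?posrE // ltr_pdivlMr //; lra.
Qed.

(* once the gap is at most P, each descent step raises 1/gap_k by beta/(2P) *)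
Lemma descents_small_gap k : gap_above eps gap k -> gap k <= P ->
  (descents k)%:R + 2 * P / beta * (eps^-1 - (gap k)^-1)
    <= ceil_pos (2 * ln (gap 0 / P) / beta) + 2 * P / (beta * eps) - 2 / beta.
Proof.
have b0 := beta0; have e0 := eps0; have P0' := P0.
set C := ceil_pos _; have C0 : 0 <= C := ceil_pos_ge0 _.
have hPe : 2 * P / (beta * eps) = 2 * P / beta * eps^-1 by field; lra.
have c0 : 0 <= 2 * P / beta by apply: divr_ge0; lra.
have landing (D : R) : 0 < D -> D <= P -> 2 / beta <= 2 * P / beta * D^-1.
  move=> D0 DP; have -> : 2 / beta = 2 * P / beta * P^-1 by field; lra.
  by have := lef_inv D0 DP; nra.
elim: k => [|k IH] above gkP.
  by rewrite nsteps0 hPe; have := landing _ (lt_trans e0 (above 0%N isT)) gkP; lra.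
have above' := gap_above_prev above; have ek := gap_above_last above'.
rewrite nstepsS natrD; case dk: (desc k) => /=; last first.
  have [eq_gap _] := null_gap (negbT dk).
  by rewrite addr0 eq_gap; rewrite eq_gap in gkP; exact: IH.
have hd := descent_gap_lb dk ek.
have g1 : 0 < gap k.+1 by have := gap_above_last above; lra.
case: (lerP (gap k) P) => gkP'.
  move: hd; rewrite /gap_lb gkP' => hd.
  have := ler_wpM2l c0 (inv_gain P0 b0 (lt_trans e0 ek) g1 hd).
  have -> : 2 * P / beta * ((gap k)^-1 + beta / (2 * P))
      = 2 * P / beta * (gap k)^-1 + 1 by field; lra.
  have := IH above' gkP'; lra.
have := ceil_pos_S (descents_large_gap_lt above' gkP'); rewrite -/C -natr1.
have := landing _ g1 gkP; rewrite hPe; lra.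
Qed.

Lemma descent_count k : gap_above eps gap k -> (descents k.+1)%:R <= descent_bound.
Proof.
move=> above; have ek := gap_above_last above.
have b0 := beta0; have b1 := beta1; have e0 := eps0.
have step : (descents k.+1)%:R <= (descents k)%:R + 1 :> R.
  by rewrite nstepsS natrD lerD2l; case: (desc k).
have [bd0 _] := count_bounds_ge0.
case: (lerP (gap k) P) => gkP.
  have := descents_small_gap above gkP.
  have : 0 <= 2 * P / beta * (eps^-1 - (gap k)^-1).
    apply: mulr_ge0; first by apply: divr_ge0; [have := P0 | ]; lra.
    by have := lef_inv e0 (ltW ek); lra.
  have : 1 <= 2 / beta by rewrite ler_pdivlMr //; lra.
  lra.
have := ceil_pos_S (descents_large_gap_lt above gkP); rewrite -natr1.
have : 0 <= 2 * P / (beta * eps) by rewrite divr_ge0 ?mulr_ge0 // ltW.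
lra.
Qed.

Lemma gap_reaches_eps : exists K, gap K <= eps.
Proof.
apply: contrapT => never.
have above k : gap_above eps gap k.
  by move=> j _; rewrite ltNge; apply/negP => hj; apply: never; exists j.
have [bd0 bn0] := count_bounds_ge0.
have := archi_boundP (addr_ge0 bd0 bn0); set n := Num.Def.archi_bound _ => hn.
have := descent_count (above n); have := null_count (above n).
have : (descents n)%:R <= (descents n.+1)%:R :> R by rewrite ler_nat nstepsS leq_addr.
have := congr1 (fun m => m%:R : R) (nsteps_compl desc n); rewrite natrD.
lra.
Qed.

Theorem step_counts : exists K,
  [/\ gap K <= eps, (forall k, (k < K)%N -> eps < gap k),
      (descents K)%:R <= descent_bound & (nulls K)%:R <= null_bound].
Proof.
have [K hK Kmin] := ex_minnP gap_reaches_eps.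
have before k : (k < K)%N -> eps < gap k.
  by move=> kK; rewrite ltNge; apply/negP => /Kmin; rewrite leqNgt kK.
have [bd0 bn0] := count_bounds_ge0.
exists K; split => //; case: K hK {Kmin} before => [|k] hK before; rewrite ?nsteps0 //.
  by apply: descent_count => j jk; apply: before; rewrite ltnS.
have above : gap_above eps gap k by move=> j jk; apply: before; rewrite ltnS.
have dk : desc k.
  apply/negPn/negP => /null_gap [eq_gap _].
  by have := gap_above_last above; rewrite -eq_gap; lra.
by rewrite nstepsS dk addn0; exact: null_count.
Qed.

End Counting.

Lemma prox_point_subgrad (R : realType) (d : nat) (h : 'rV[R]_d -> R) (rho : R)
    (X Z : 'rV[R]_d) :
  0 < rho -> convex_fun h ->
  (forall w, h Z + rho / 2 * enorm (Z - X) ^+ 2 <= h w + rho / 2 * enorm (w - X) ^+ 2) ->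
  forall w, h Z + dotp (rho *: (X - Z)) (w - Z) <= h w.
Proof.
move=> r0 hconv hmin w; set u := w - Z.
suff : 0 <= h w - h Z - dotp (rho *: (X - Z)) u by lra.
apply: (@ge0_of_perturbations _ _ (rho / 2 * dotp u u)).
  by apply: mulr_ge0; [lra | exact: dotp_ge0].
move=> t t0 t1; set y := t *: w + (1 - t) *: Z.
have hy := hconv w Z t (ltW t0) t1.
have hm := hmin y.
have ey : y - X = (Z - X) + t *: u by apply/rowP => i; rewrite !mxE; ring.
rewrite !enorm_sq ey (dotp_sqD (Z - X) (t *: u)) dotpZr dotp_sqZ in hm.
have -> : dotp (rho *: (X - Z)) u = - (rho * dotp (Z - X) u).
  by rewrite dotpZl -opprB dotpNl mulrN.
suff : 0 <= t * (h w - h Z + rho * dotp (Z - X) u + t * (rho / 2 * dotp u u)).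
  by rewrite pmulr_rge0 //; lra.
have -> : t * (h w - h Z + rho * dotp (Z - X) u + t * (rho / 2 * dotp u u))
   = (t * h w + (1 - t) * h Z) - h Z
     + rho / 2 * (2 * (t * dotp (Z - X) u) + t ^+ 2 * dotp u u) by field.
lra.
Qed.

(* A subgradient s of a minorant h <= f at z (for all w, h z + <s, w - z> <= h w)
   has norm at most the Lipschitz constant of f: otherwise moving from z along s
   would make h exceed f. *)
Lemma minorant_subgrad_bound (R : realType) (d : nat) (f h : 'rV[R]_d -> R) (M : R)
    (z s : 'rV[R]_d) :
  0 <= M -> lipschitz_with f M -> (forall w, h w <= f w) ->
  (forall w, h z + dotp s (w - z) <= h w) -> dotp s s <= M ^+ 2.
Proof.
move=> M0 hL hle hs.
set n := enorm s; have n0 : 0 <= n := enorm_ge0 s.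
rewrite -enorm_sq -/n; suff : n <= M by move=> nM; rewrite lerXn2r ?nnegrE //; lra.
rewrite leNgt; apply/negP => Mn.
set E := f z - h z; have E0 : 0 <= E by rewrite subr_ge0.
have nM0 : 0 < n * (n - M) by apply: mulr_gt0; lra.
set t := (E + 1) / (n * (n - M)).
have t0 : 0 < t by apply: divr_gt0; lra.
have ew : z + t *: s - z = t *: s by rewrite addrC addKr.
have h1 := hs (z + t *: s); rewrite ew dotpZr -enorm_sq -/n in h1.
have h2 := hle (z + t *: s).
have h3 := hL (z + t *: s) z; rewrite ew (enormZ _ (ltW t0)) -/n in h3.
have h4 : f (z + t *: s) - f z <= M * (t * n) by apply: le_trans (ler_norm _) h3.
have ht : t * (n * (n - M)) = E + 1 by rewrite /t mulrAC -mulrA mulfV ?mulr1 // lt0r_neq0.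
have : t * (n * (n - M)) = t * n ^+ 2 - M * (t * n) by ring.
rewrite /E in E0 ht; lra.
Qed.

Lemma lipschitz_const_gt0 (R : realType) (d : nat) (f : 'rV[R]_d -> R) (M : R)
    (a b : 'rV[R]_d) :
  lipschitz_with f M -> f a != f b -> 0 < M.
Proof.
move=> hL fab; rewrite ltNge; apply/negP => M0.
have := hL a b; have := enorm_ge0 (a - b) => n0 hl.
have : `|f a - f b| <= 0 by apply: le_trans hl _; nra.
by rewrite normr_le0 subr_eq0 (negbTE fab).
Qed.

Section ProximalBundle.
Variables (R : realType) (d : nat) (f : 'rV[R]_d -> R) (M : R)
  (orc : 'rV[R]_d -> 'rV[R]_d) (beta rho D2 : R) (xs : 'rV[R]_d)
  (x z : nat -> 'rV[R]_d) (fm : nat -> 'rV[R]_d -> R).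
Hypotheses (f_convex : convex_fun f) (f_lip : lipschitz_with f M) (M0 : 0 < M)
  (orc_subgrad : forall y, is_subgrad f y (orc y)) (xs_min : forall w, f xs <= f w).
Hypotheses (beta0 : 0 < beta) (beta1 : beta < 1) (rho0 : 0 < rho) (D20 : 0 < D2).
Hypothesis dist_le : forall k, dist_set (x k) (argmin_set f) ^+ 2 <= D2.
Hypothesis model_init : forall y, f (x 0%N) + dotp (orc (x 0%N)) (y - x 0%N) <= fm 0%N y.
Hypothesis model_convex : forall k, convex_fun (fm k).
Hypothesis prox_min : forall k w, fm k (z k.+1) + rho / 2 * enorm (z k.+1 - x k) ^+ 2
  <= fm k w + rho / 2 * enorm (w - x k) ^+ 2.
Hypothesis step_rule : forall k,
  x k.+1 = if descent_step f beta x z fm k then z k.+1 else x k.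
Hypothesis model_le : forall k y, fm k y <= f y.
Hypothesis model_cut : forall k y,
  f (z k.+1) + dotp (orc (z k.+1)) (y - z k.+1) <= fm k.+1 y.
Hypothesis model_agg : forall k y, ~~ descent_step f beta x z fm k ->
  fm k (z k.+1) + dotp (rho *: (x k - z k.+1)) (y - z k.+1) <= fm k.+1 y.

Local Notation desc := (descent_step f beta x z fm).
Local Notation gap k := (f (x k) - f xs).
Local Notation kappa := (8 * M ^+ 2 / (rho * (1 - beta) ^+ 2)).

Definition prox_gap (k : nat) : R :=
  f (x k) - (fm k (z k.+1) + rho / 2 * dotp (z k.+1 - x k) (z k.+1 - x k)).

Lemma prox_model_subgrad k w :
  fm k (z k.+1) + dotp (rho *: (x k - z k.+1)) (w - z k.+1) <= fm k w.
Proof. exact: prox_point_subgrad rho0 (model_convex k) (prox_min k) w. Qed.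

Lemma orc_norm_bound y : dotp (orc y) (orc y) <= M ^+ 2.
Proof. exact: minorant_subgrad_bound (ltW M0) f_lip (fun w => lexx _) (orc_subgrad y). Qed.

Lemma agg_norm_bound k :
  dotp (rho *: (x k - z k.+1)) (rho *: (x k - z k.+1)) <= M ^+ 2.
Proof. exact: minorant_subgrad_bound (ltW M0) f_lip (model_le k) (prox_model_subgrad k). Qed.

(* comparing the proximal subproblem with the points t y + (1-t) x_k, y in X^* *)
Lemma prox_gap_dist k t : 0 <= t -> t <= 1 ->
  t * gap k - prox_gap k <= rho / 2 * t ^+ 2 * dist_set (x k) (argmin_set f) ^+ 2.
Proof.
move=> t0 t1; set X := x k; rewrite /dist_set.
apply: le_mul_sqr_inf.
- by exists (enorm (X - xs)); exists xs.
- by move=> e [y _ <-]; exact: enorm_ge0.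
- by apply: mulr_ge0; [have := rho0; lra | exact: sqr_ge0].
move=> e [y Sy <-].
have fy : f y = f xs by apply/eqP; rewrite eq_le Sy xs_min.
set yy := t *: y + (1 - t) *: X.
have hy := f_convex y X t0 t1; rewrite -/yy fy in hy.
have hm := prox_min k yy; rewrite !enorm_sq -/X in hm.
have eyy : yy - X = t *: (y - X) by apply/rowP => i; rewrite !mxE; ring.
rewrite eyy dotp_sqZ (dotp_sqN y X) in hm.
have := model_le k yy; rewrite /prox_gap -/X enorm_sq.
lra.
Qed.

Lemma prox_gap_ge0 k : 0 <= prox_gap k.
Proof. by have := prox_gap_dist k (lexx 0) ler01; rewrite expr0n /= mulr0 !mul0r sub0r oppr_le0. Qed.

Lemma gap_lb_le_prox_gap k : gap_lb (rho * D2) (gap k) <= prox_gap k.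
Proof.
have r0 := rho0; have D2pos := D20; have P0 : 0 < rho * D2 := mulr_gt0 r0 D2pos.
have bound t : 0 <= t -> t <= 1 -> t * gap k - rho / 2 * t ^+ 2 * D2 <= prox_gap k.
  move=> t0 t1; have := prox_gap_dist k t0 t1.
  have c0 : 0 <= rho / 2 * t ^+ 2 by apply: mulr_ge0; [lra | exact: sqr_ge0].
  have := ler_wpM2l c0 (dist_le k); lra.
rewrite /gap_lb; case: ifP => gP.
  have t0 : 0 <= gap k / (rho * D2) by rewrite divr_ge0 ?subr_ge0 // ltW.
  have t1 : gap k / (rho * D2) <= 1 by rewrite ler_pdivrMr // mul1r.
  apply: le_trans (bound _ t0 t1).
  by rewrite le_eqVlt; apply/orP; left; apply/eqP; field; lra.
apply: le_trans (bound 1 ler01 (lexx _)).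
have : rho * D2 < gap k by rewrite ltNge gP.
lra.
Qed.

Lemma kappa_gt0 : 0 < kappa.
Proof.
have m0 := M0; have b1 := beta1.
by apply: divr_gt0; [nra | rewrite mulr_gt0 ?exprn_gt0 //; lra].
Qed.

Lemma prox_gap_le_model_gap k : prox_gap k <= f (x k) - fm k (z k.+1).
Proof. by have := dotp_ge0 (z k.+1 - x k); have := rho0; rewrite /prox_gap; nra. Qed.

Lemma descent_decrease k : desc k -> gap k.+1 <= gap k - beta * prox_gap k.
Proof.
move=> dk; have b0 := beta0.
have hx : x k.+1 = z k.+1 by rewrite step_rule dk.
have := prox_gap_le_model_gap k; move: dk; rewrite /descent_step hx; nra.
Qed.

(* after a null step the new model contains a convex combination of the new cut and
   the aggregate cut; evaluating the proximal subproblem along the segment between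
   them gives, for every theta in [0, 1], *)
Lemma null_step_recursion k theta : ~~ desc k -> 0 <= theta -> theta <= 1 ->
  prox_gap k.+1
    <= prox_gap k - theta * ((1 - beta) * prox_gap k) + theta ^+ 2 * (2 * M ^+ 2 / rho).
Proof.
move=> nd th0 th1; have r0 := rho0; have b1 := beta1.
have hx : x k.+1 = x k by rewrite step_rule (negbTE nd).
have hc := model_cut k (z k.+2).
have ha := model_agg (z k.+2) nd.
have hnull : f (x k) - f (z k.+1) < beta * (f (x k) - fm k (z k.+1)) by rewrite ltNge.
have Gm := prox_gap_le_model_gap k.
have ev : z k.+2 - x k = (z k.+2 - z k.+1) + (z k.+1 - x k).
  by apply/rowP => i; rewrite !mxE; ring.
have eG' : prox_gap k.+1 = f (x k) - (fm k.+1 (z k.+2) + rho / 2 *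
    (dotp (z k.+2 - z k.+1) (z k.+2 - z k.+1)
     + 2 * dotp (z k.+2 - z k.+1) (z k.+1 - x k) + dotp (z k.+1 - x k) (z k.+1 - x k))).
  by rewrite /prox_gap hx ev dotp_sqD.
have esW : dotp (rho *: (x k - z k.+1)) (z k.+2 - z k.+1)
    = - (rho * dotp (z k.+2 - z k.+1) (z k.+1 - x k)).
  by rewrite dotpZl -opprB dotpNl dotpC mulrN.
have eG : prox_gap k
    = f (x k) - (fm k (z k.+1) + rho / 2 * dotp (z k.+1 - x k) (z k.+1 - x k)) by [].
rewrite esW in ha; rewrite eG'.
set W := z k.+2 - z k.+1 in hc ha esW *; set V := z k.+1 - x k in ha esW eG *.
set g := orc (z k.+1) in hc *; set s := rho *: (x k - z k.+1) in esW *.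
(* the two cuts at z_{k+2}: <g - s, W> is controlled by completing the square *)
have sq := linear_quad_lb (theta *: (g - s)) W r0.
rewrite dotp_sqZ dotpZl (dotpBl g s W) esW in sq.
have hgs : theta ^+ 2 * dotp (g - s) (g - s) / (2 * rho) <= theta ^+ 2 * (2 * M ^+ 2 / rho).
  have -> : theta ^+ 2 * (2 * M ^+ 2 / rho) = theta ^+ 2 * (4 * M ^+ 2) / (2 * rho).
    by field; lra.
  apply: ler_wpM2r; first by rewrite invr_ge0; lra.
  apply: ler_wpM2l; first exact: sqr_ge0.
  have := dotp_sqB_le g s; have := orc_norm_bound (z k.+1); have := agg_norm_bound k.
  rewrite -/g -/s; lra.
(* the null step test: the model underestimates f at z_{k+1} by (1 - beta) G_k *)
have hdel : (1 - beta) * prox_gap k <= f (z k.+1) - fm k (z k.+1) by nra.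
have th1' : 0 <= 1 - theta by lra.
have := ler_wpM2l th0 hc; have := ler_wpM2l th1' ha.
have := ler_wpM2l th0 hdel.
lra.
Qed.

Lemma null_step_gain k : ~~ desc k -> prox_gap k <= M ^+ 2 / (2 * rho) ->
  prox_gap k ^+ 2 <= kappa * (prox_gap k - prox_gap k.+1).
Proof.
move=> nd Gub; have r0 := rho0; have b0 := beta0; have b1 := beta1; have m0 := M0.
have k0 := kappa_gt0; have G0 := prox_gap_ge0 k.
set theta := rho * (1 - beta) * prox_gap k / (4 * M ^+ 2).
have th0 : 0 <= theta by apply: divr_ge0; [apply: mulr_ge0; nra | nra].
have th1 : theta <= 1.
  have : rho * prox_gap k <= M ^+ 2 / 2.
    have -> : M ^+ 2 / 2 = rho * (M ^+ 2 / (2 * rho)) by field; lra.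
    by apply: ler_wpM2l; [lra | exact: Gub].
  by rewrite /theta ler_pdivrMr ?mul1r; nra.
have := null_step_recursion nd th0 th1.
have -> : theta ^+ 2 * (2 * M ^+ 2 / rho)
    = theta * ((1 - beta) * prox_gap k) - prox_gap k ^+ 2 / kappa.
  by rewrite /theta; field; apply/and3P; split; apply/eqP; try lra; nra.
move=> h; have -> : prox_gap k ^+ 2 = kappa * (prox_gap k ^+ 2 / kappa) by field; lra.
by apply: ler_wpM2l; lra.
Qed.

Lemma prox_gap_cut_bound k (g : 'rV[R]_d) :
  (forall y, f (x k) + dotp g (y - x k) <= fm k y) -> dotp g g <= M ^+ 2 ->
  prox_gap k <= M ^+ 2 / (2 * rho).
Proof.
move=> hcut hg; have r0 := rho0.
have := hcut (z k.+1); have := linear_quad_lb g (z k.+1 - x k) r0.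
have : dotp g g / (2 * rho) <= M ^+ 2 / (2 * rho).
  by apply: ler_wpM2r => //; rewrite invr_ge0; lra.
rewrite /prox_gap; lra.
Qed.

(* the proximal gap stays below M^2 / (2 rho): descent steps restart from a cut at
   the new center, null steps decrease G_k *)
Lemma prox_gap_le k : prox_gap k <= M ^+ 2 / (2 * rho).
Proof.
elim: k => [|k IH]; first exact: prox_gap_cut_bound model_init (orc_norm_bound _).
case dk: (desc k).
  apply: (prox_gap_cut_bound (g := orc (z k.+1))) (orc_norm_bound _) => y.
  by rewrite step_rule dk; exact: model_cut.
have := null_step_gain (negbT dk) IH; have := kappa_gt0.
have := prox_gap_ge0 k; have := prox_gap_ge0 k.+1.
nra.
Qed.

Lemma null_step k : ~~ desc k ->
  gap k.+1 = gap k /\ prox_gap k ^+ 2 <= kappa * (prox_gap k - prox_gap k.+1).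
Proof.
move=> nd; have hx : x k.+1 = x k by rewrite step_rule (negbTE nd).
by split; [rewrite hx | exact: null_step_gain nd (prox_gap_le k)].
Qed.

Theorem bundle_counts (eps : R) : 0 < eps -> exists K,
  [/\ gap K <= eps, (forall k, (k < K)%N -> eps < gap k),
      (nsteps desc K)%:R <= 2 * (rho * D2) / (beta * eps)
                            + ceil_pos (2 * ln (gap 0 / (rho * D2)) / beta) &
      (nsteps (fun i => ~~ desc i) K)%:R
        <= 4 * (rho * D2) ^+ 2 * kappa / (beta * eps ^+ 3) + 4 * kappa / (beta * (rho * D2))].
Proof.
move=> eps0.
exact: (step_counts (gap := fun k => gap k) (G := prox_gap) (desc := desc))
  (mulr_gt0 rho0 D20) eps0 beta0 beta1 kappa_gt0 gap_lb_le_prox_gap descent_decrease null_step.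
Qed.

End ProximalBundle.


Unset Implicit Arguments.
Local Open Scope classical_set_scope.

Theorem theorem1 (R : realType) (d : nat) (f : 'rV[R]_d -> R) (M : R)
  (orc : 'rV[R]_d -> 'rV[R]_d) (beta rho : R) (x0 : 'rV[R]_d)
  (x z : nat -> 'rV[R]_d) (fm : nat -> 'rV[R]_d -> R) (xs : 'rV[R]_d) :
  convex_fun f ->
  lipschitz_with f M ->
  (forall y, is_subgrad f y (orc y)) ->
  xs \in argmin_set f ->
  0 < beta -> beta < 1 -> 0 < rho ->
  PBM_run f orc beta rho x0 x z fm ->
  let fstar := f xs in
  let Dset := [set dist_set (x k) (argmin_set f) ^+ 2 | k in [set: nat]] in
  has_ubound Dset ->
  let D2 := sup Dset in
  0 < D2 ->
  forall eps : R, 0 < eps -> eps <= f x0 - fstar ->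
  exists K : nat,
    [/\ f (x K) - fstar <= eps,
        (forall k, (k < K)%N -> eps < f (x k) - fstar),
        (n_descent f beta x z fm K)%:R
          <= 2 * rho * D2 / (beta * eps)
             + ceil_pos (2 * ln ((f x0 - fstar) / (rho * D2)) / beta) &
        (n_null f beta x z fm K)%:R
          <= 48 * rho * M ^+ 2 * D2 ^+ 2 / (beta * (1 - beta) ^+ 2 * eps ^+ 3)
             + 32 * M ^+ 2 / (beta * (1 - beta) ^+ 2 * rho ^+ 2 * D2)].
Proof.
move=> f_convex f_lip orc_subgrad xs_argmin beta0 beta1 rho0 run fstar Dset Dset_ub D2 D20
  eps eps0 eps_le.
case: run => [[x_init _] model_init [model_convex prox_min] step_rule
  [model_le model_cut model_agg]].
have xs_min : forall w, f xs <= f w := set_mem xs_argmin.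
have M0 : 0 < M.
  by apply: (lipschitz_const_gt0 (a := x0) (b := xs) f_lip); apply/eqP => e; move: eps_le;
     rewrite /fstar e subrr; lra.
have dist_le k : dist_set (x k) (argmin_set f) ^+ 2 <= D2.
  by apply: (ub_le_sup Dset_ub); exists k.
have cut0 y : f (x 0%N) + dotp (orc (x 0%N)) (y - x 0%N) <= fm 0%N y.
  by rewrite model_init x_init.
have [K [hK before nd nn]] := bundle_counts f_convex f_lip M0 orc_subgrad xs_min beta0 beta1
  rho0 D20 dist_le cut0 model_convex prox_min step_rule model_le model_cut model_agg eps0.
exists K; split => //.
  by rewrite /n_descent card_nsteps_classic -x_init; rewrite mulrA in nd.
rewrite /n_null (card_nsteps_classic (fun k => ~~ descent_step f beta x z fm k)).
apply: le_trans nn _.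
have P0 : 0 < rho * D2 := mulr_gt0 rho0 D20.
have b0 : 0 < 1 - beta by lra.
have -> : 4 * (rho * D2) ^+ 2 * (8 * M ^+ 2 / (rho * (1 - beta) ^+ 2)) / (beta * eps ^+ 3)
    = 2 / 3 * (48 * rho * M ^+ 2 * D2 ^+ 2 / (beta * (1 - beta) ^+ 2 * eps ^+ 3)).
  by field; apply/and4P; split; apply/eqP; try lra; nra.
have -> : 4 * (8 * M ^+ 2 / (rho * (1 - beta) ^+ 2)) / (beta * (rho * D2))
    = 32 * M ^+ 2 / (beta * (1 - beta) ^+ 2 * rho ^+ 2 * D2).
  by field; apply/and4P; split; apply/eqP; try lra; nra.
have : 0 <= 48 * rho * M ^+ 2 * D2 ^+ 2 / (beta * (1 - beta) ^+ 2 * eps ^+ 3).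
  by rewrite divr_ge0 ?mulr_ge0 ?sqr_ge0 ?exprn_ge0 // ltW.
lra.
Qed.
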